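(* For all $m,n\in\mathbb{N}$ and every $\xi\in\mathbb{C}^{\Lambda^{\le}(m,n)}$, \[ \pi_2\big(M_\xi\colon\mathcal{P}_{\le m}(\mathbb{T}^n)\to\ell_{\frac{2m}{m+1}}(\Lambda^{\le}(m,n))\big)\le|\Lambda^{\le}(m,n)|^{\frac1{2m}}\|\xi\|_\infty . \] Moreover, for $\xi=\mathbf 1=(1,\dots,1)$, \[ \sqrt{1+\tfrac{n-1}{m}}\le\pi_2\big(M_{\mathbf 1}\colon\mathcal{P}_{\le m}(\mathbb{T}^n)\to\ell_{\frac{2m}{m+1}}(\Lambda^{\le}(m,n))\big)=|\Lambda^{\le}(m,n)|^{\frac1{2m}}\le2\sqrt{2e}\,\sqrt{1+\tfrac{n-1}{m}}. \]
   Context: $\Lambda^{\le}(m,n)=\{\alpha\in\mathbb{N}_0^n:\sum_j\alpha_j\le m\}$ and $|\Lambda^{\le}(m,n)|$ its cardinality. $\mathcal{P}_{\le m}(\mathbb{T}^n)$ is the space of analytic trigonometric polynomials $\sum_{\alpha\in\Lambda^{\le}(m,n)}c_\alpha z^\alpha$ on $\mathbb{T}^n$ with sup norm; $M_\xi P=(\xi_\alpha\widehat P(\alpha))_\alpha$. $\pi_2$ is the absolutely 2-summing norm. *)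

From mathcomp Require Import all_boot all_order all_algebra.
From mathcomp Require Import all_classical all_reals all_analysis.
From mathcomp Require Import complex.
Set Implicit Arguments. Unset Strict Implicit. Unset Printing Implicit Defensive.
Import Order.TTheory GRing.Theory Num.Theory.
Local Open Scope ring_scope.
Local Open Scope classical_set_scope.

Definition cabs (R : realType) (z : R[i]) : R := ComplexField.Normc.normc z.

(* Lambda^<=(m,n) = { alpha in N_0^n : |alpha| <= m }.  Each coordinate of such
   an alpha is <= m, so alpha is encoded as a function 'I_n -> 'I_m.+1. *)
Definition Lam (m n : nat) :=
  {a : {ffun 'I_n -> 'I_m.+1} | (\sum_(j < n) (a j : nat) <= m)%N}.

Definition alpha_nat (m n : nat) (a : Lam m n) (j : 'I_n) : nat := val a j.

Definition card_Lam (m n : nat) : nat := #|{: Lam m n}|.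

(* An element P of P_{<=m}(T^n) is given by its coefficient vector
   (hat P(alpha))_{alpha in Lambda^<=(m,n)}; its value at z : *)
Definition peval (R : realType) (m n : nat) (c : Lam m n -> R[i])
  (z : 'I_n -> R[i]) : R[i] :=
  \sum_(a : Lam m n) c a * \prod_(j < n) z j ^+ alpha_nat a j.

Definition torus (R : realType) (n : nat) : set ('I_n -> R[i]) :=
  [set z | forall j, cabs (z j) = 1].

Definition supnorm (R : realType) (m n : nat) (c : Lam m n -> R[i]) : R :=
  sup [set cabs (peval c z) | z in @torus R n].

(* closed unit ball of the dual of (P_{<=m}(T^n), sup norm): linear functionals
   phi(P) = sum_alpha w_alpha hat P(alpha) with |phi(P)| <= ||P||_oo for all P *)
Definition dual_ball (R : realType) (m n : nat) : set (Lam m n -> R[i]) :=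
  [set w | forall c : Lam m n -> R[i],
      cabs (\sum_(a : Lam m n) w a * c a) <= supnorm c].

Definition weak2 (R : realType) (m n k : nat) (x : 'I_k -> Lam m n -> R[i]) : R :=
  sup [set Num.sqrt (\sum_(i < k) cabs (\sum_(a : Lam m n) w a * x i a) ^+ 2)
       | w in @dual_ball R m n].

Definition lpnorm (R : realType) (m n : nat) (p : R) (y : Lam m n -> R[i]) : R :=
  (\sum_(a : Lam m n) cabs (y a) `^ p) `^ p^-1.

Definition linfnorm (R : realType) (m n : nat) (y : Lam m n -> R[i]) : R :=
  \big[Num.max/0]_(a : Lam m n) cabs (y a).

Definition pm (R : realType) (m : nat) : R := (2 * m)%:R / (m.+1)%:R.

Definition Mxi (R : realType) (m n : nat) (xi : Lam m n -> R[i])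
  (c : Lam m n -> R[i]) : Lam m n -> R[i] := fun a => xi a * c a.

Definition pi2 (R : realType) (m n : nat) (p : R)
  (T : (Lam m n -> R[i]) -> (Lam m n -> R[i])) : R :=
  inf [set C : R | 0 <= C /\
        forall (k : nat) (x : 'I_k -> Lam m n -> R[i]),
          Num.sqrt (\sum_(i < k) lpnorm p (T (x i)) ^+ 2) <= C * weak2 x].

(* Let w be a primitive (m+1)-th root of unity.  Since every exponent of a
   monomial z^alpha, alpha in Lambda, is at most m, the monomials are orthogonal
   for the average over the grid {(w^j_1, ..., w^j_n)} of T^n.  Each grid point
   evaluation is a norm-one functional on P_<=m(T^n), so Parseval gives
   sum_i ||(hat x_i(alpha))_alpha||_2^2 <= w_2(x_i)^2: the coefficient map into
   l_2 is 2-summing with constant 1.  By the power-mean inequality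
   ||M_xi c||_p <= |Lambda|^(1/p - 1/2) ||xi||_oo ||c||_2, and 1/p - 1/2 = 1/(2m)
   for p = 2m/(m+1); this is the upper bound.  For xi = 1 the family of all grid
   evaluations has unimodular coefficient vectors, and again by Parseval weak
   l_2 norm at most (#grid |Lambda|)^(1/2), which forces the reverse bound.
   Finally |Lambda| = C(m+n, m) and ((m+n)/m)^m <= C(m+n, m) <= (e (m+n)/m)^m. *)

From mathcomp Require Import all_boot all_order all_algebra.
From mathcomp Require Import all_classical all_reals all_analysis.
From mathcomp Require Import complex.
From mathcomp Require Import cyclic separable cyclotomic.
From mathcomp Require Import ring lra zify.
Set Implicit Arguments.
Unset Strict Implicit.
Unset Printing Implicit Defensive.
Import Order.TTheory GRing.Theory Num.Theory.
Local Open Scope ring_scope.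
Local Open Scope classical_set_scope.

Lemma prim_root_exists (F : closedFieldType) k :
  (0 < k)%N -> k%:R != 0 :> F -> {z : F | k.-primitive_root z}.
Proof.
move=> k_gt0 k_neq0; have [r Dp] := closed_field_poly_normal ('X^k - 1 : {poly F}).
apply/sigW; rewrite (monicP _) ?monicXnsubC // scale1r in Dp.
have rk1 : all k.-unity_root r by apply/allP=> z; rewrite -root_prod_XsubC -Dp.
have sz_r : (k < (size r).+1)%N by rewrite -(size_prod_XsubC r id) -Dp size_XnsubC.
have [|z] := hasP (has_prim_root k_gt0 rk1 _ sz_r); last by exists z.
by rewrite -separable_prod_XsubC -Dp separable_Xn_sub_1.
Qed.

Lemma sum_expr_unity_root (F : idomainType) (z : F) k :
  z ^+ k = 1 -> z != 1 -> \sum_(t < k) z ^+ t = 0.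
Proof.
move=> zk z1; have := subrX1 z k; rewrite zk subrr => /esym/eqP.
by rewrite mulf_eq0 subr_eq0 (negbTE z1) => /eqP.
Qed.

Section ComplexModulus.
Variable R : realType.
Implicit Types x y z : R[i].

Lemma cabsE z : (cabs z)%:C%C = `|z|.
Proof. by rewrite normc_def; case: z. Qed.

Lemma cabs_ge0 z : 0 <= cabs z.
Proof. by rewrite -(@lecR R) cabsE normr_ge0. Qed.

Lemma cabs0 : cabs (0 : R[i]) = 0.
Proof. by apply: (@complexI R); rewrite cabsE normr0. Qed.

Lemma cabs1 : cabs (1 : R[i]) = 1.
Proof. by apply: (@complexI R); rewrite cabsE normr1. Qed.

Lemma cabsM x y : cabs (x * y) = cabs x * cabs y.
Proof. by apply: (@complexI R); rewrite rmorphM /= !cabsE normrM. Qed.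

Lemma cabsX x k : cabs (x ^+ k) = cabs x ^+ k.
Proof. by apply: (@complexI R); rewrite rmorphXn /= !cabsE normrX. Qed.

Lemma cabs_prod (I : finType) (F : I -> R[i]) :
  cabs (\prod_i F i) = \prod_i cabs (F i).
Proof.
apply: (@complexI R); rewrite rmorph_prod /= cabsE normr_prod.
by apply: eq_bigr => i _; rewrite cabsE.
Qed.

Lemma ler_cabs_sum (I : finType) (F : I -> R[i]) :
  cabs (\sum_i F i) <= \sum_i cabs (F i).
Proof.
by rewrite -(@lecR R) rmorph_sum /= cabsE (le_trans (ler_norm_sum _ _ _)).
Qed.

Lemma cabs_sqr z : ((cabs z) ^+ 2)%:C%C = z * z^*%C.
Proof. by rewrite rmorphXn /= cabsE sqr_normc. Qed.

End ComplexModulus.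

Section PowerMean.
Variable R : realType.

Lemma powR_le_affine (x r : R) : 0 <= x -> 0 < r < 1 -> x `^ r <= r * x + (1 - r).
Proof.
move=> x0 /andP[r0 r1].
have := @conjugate_powR R (x `^ r) 1 (r^-1) ((1 - r)^-1) (powR_ge0 _ _) ler01.
rewrite invr_gt0 r0 invr_gt0 subr_gt0 r1 !invrK addrC subrK => /(_ isT isT erefl).
by rewrite mulr1 -powRrM mulfV ?gt_eqF // powRr1 // powR1 mul1r mulrC.
Qed.

(* Jensen for the concave map x |-> x `^ r, via the tangent line at the mean. *)
Lemma sum_powR_le (I : finType) (s : I -> R) (r : R) : 0 < r < 1 ->
  (forall i, 0 <= s i) -> (0 < #|I|)%N ->
  \sum_i s i `^ r <= #|I|%:R * ((\sum_i s i) / #|I|%:R) `^ r.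
Proof.
move=> r01 s_ge0 I_gt0; set S := \sum_i s i; set N : R := #|I|%:R.
have N_gt0 : 0 < N by rewrite ltr0n.
have [S0|S_neq0] := eqVneq S 0.
  have s0 i : s i = 0 := psumr_eq0P (fun j _ => s_ge0 j) S0 isT.
  rewrite big1 => [|i _]; last by rewrite s0 powR0 // gt_eqF //; case/andP: r01.
  by rewrite mulr_ge0 ?powR_ge0 // ltW.
have S_gt0 : 0 < S by rewrite lt_def S_neq0 sumr_ge0.
set M := S / N; have M_gt0 : 0 < M by rewrite divr_gt0.
have scale i : s i `^ r = M `^ r * (s i / M) `^ r.
  rewrite -powRM ?divr_ge0 ?(ltW M_gt0) ?(ltW S_gt0) //.
  by rewrite mulrC divfK ?gt_eqF.
under eq_bigr do rewrite scale.
rewrite -big_distrr /= mulrC ler_pM2r ?powR_gt0 //.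
apply: le_trans.
  apply: ler_sum => i _; apply: powR_le_affine r01.
  exact: divr_ge0 (s_ge0 i) (ltW M_gt0).
rewrite big_split /= -big_distrr -big_distrl /= sumr_const -/S -mulr_natr -/N.
have -> : S / M = N by rewrite /M invf_div mulrC divfK ?gt_eqF.
by rewrite -mulrDl addrC subrK mul1r.
Qed.

End PowerMean.

Lemma root_of_unity_exists (R : realType) k : (0 < k)%N ->
  {w : R[i] | k.-primitive_root w}.
Proof. by move=> k_gt0; apply: prim_root_exists; rewrite ?pnatr_eq0 -?lt0n. Qed.

Section Torus.
Variable R : realType.
Variables m n : nat.
Local Notation L := (Lam m n).
Local Notation K := m.+1.
Implicit Types (a b : L) (c w : L -> R[i]) (z : 'I_n -> R[i]).

Definition monomial (z : 'I_n -> R[i]) (a : L) : R[i] :=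
  \prod_(j < n) z j ^+ alpha_nat a j.

Definition l2norm (c : L -> R[i]) : R := Num.sqrt (\sum_a cabs (c a) ^+ 2).

Lemma card_Lam_gt0 : (0 < card_Lam m n)%N.
Proof.
apply/card_gt0P; have sum0 : (\sum_(j < n) [ffun _ => ord0 : 'I_K] j <= m)%N.
  by rewrite big1 // => j _; rewrite ffunE.
by exists (exist (fun a : {ffun 'I_n -> 'I_K} => (\sum_(j < n) a j <= m)%N) _ sum0).
Qed.

Lemma cabs_monomial z a : torus z -> cabs (monomial z a) = 1.
Proof. by move=> zT; rewrite cabs_prod big1 // => j _; rewrite cabsX zT expr1n. Qed.

Lemma cabs_peval_le c z : torus z -> cabs (peval c z) <= \sum_a cabs (c a).
Proof.
move=> zT; apply: le_trans (ler_cabs_sum _) _.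
by apply: ler_sum => a _; rewrite cabsM cabs_monomial // mulr1.
Qed.

Lemma torus1 : torus (fun _ : 'I_n => 1 : R[i]).
Proof. by move=> j; rewrite cabs1. Qed.

Lemma supnorm_ge c z : torus z -> cabs (peval c z) <= supnorm c.
Proof.
move=> zT; apply: ub_le_sup; last by exists z.
by exists (\sum_a cabs (c a)) => _ [y yT <-]; apply: cabs_peval_le.
Qed.

Lemma supnorm_le_sum c : supnorm c <= \sum_a cabs (c a).
Proof.
apply: ge_sup; first by exists (cabs (peval c (fun _ => 1))), (fun _ => 1); first exact: torus1.
by move=> _ [y yT <-]; apply: cabs_peval_le.
Qed.

Lemma supnorm_ge0 c : 0 <= supnorm c.
Proof. exact: le_trans (cabs_ge0 _) (supnorm_ge c torus1). Qed.

Lemma dual_ball0 : dual_ball (fun _ : L => 0 : R[i]).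
Proof. by move=> c; rewrite big1 ?cabs0 ?supnorm_ge0 // => a _; rewrite mul0r. Qed.

Lemma dual_ball_coord_le1 w a : dual_ball w -> cabs (w a) <= 1.
Proof.
move=> /(_ (fun b => (b == a)%:R : R[i])); rewrite (bigD1 a) //= eqxx mulr1 big1 ?addr0.
  move/le_trans; apply; apply: le_trans (supnorm_le_sum _) _.
  by rewrite (bigD1 a) //= eqxx cabs1 big1 ?addr0 // => b /negbTE->; rewrite cabs0.
by move=> b /negbTE->; rewrite mulr0.
Qed.

Lemma dual_ball_monomial z : torus z -> dual_ball (monomial z).
Proof.
move=> zT c; have := supnorm_ge c zT; rewrite /peval.
by under eq_bigr do rewrite mulrC.
Qed.

Lemma weak2_ge k (x : 'I_k -> L -> R[i]) w : dual_ball w ->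
  Num.sqrt (\sum_(i < k) cabs (\sum_a w a * x i a) ^+ 2) <= weak2 x.
Proof.
move=> wB; apply: ub_le_sup; last by exists w.
exists (Num.sqrt (\sum_(i < k) (\sum_a cabs (x i a)) ^+ 2)) => _ [v vB <-].
rewrite ler_sqrt; last by apply: sumr_ge0 => i _; apply: sqr_ge0.
apply: ler_sum => i _.
have sum_ge0 : 0 <= \sum_a cabs (x i a) by apply: sumr_ge0 => a _; apply: cabs_ge0.
rewrite lerXn2r ?nnegrE ?cabs_ge0 //.
apply: le_trans (ler_cabs_sum _) _; apply: ler_sum => a _.
by rewrite cabsM ler_piMl ?cabs_ge0 ?(dual_ball_coord_le1 _ vB).
Qed.

Lemma weak2_le k (x : 'I_k -> L -> R[i]) B :
  (forall w, dual_ball w ->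
     Num.sqrt (\sum_(i < k) cabs (\sum_a w a * x i a) ^+ 2) <= B) ->
  weak2 x <= B.
Proof.
move=> xB; apply: ge_sup; last by move=> _ [v vB <-]; apply: xB.
by eexists; exists (fun _ => 0); first exact: dual_ball0.
Qed.

Lemma weak2_ge0 k (x : 'I_k -> L -> R[i]) : 0 <= weak2 x.
Proof. exact: le_trans (sqrtr_ge0 _) (weak2_ge x dual_ball0). Qed.

Local Notation grid := {ffun 'I_n -> 'I_K}.

Section Grid.
Variable w : R[i].
Hypothesis w_prim : K.-primitive_root w.

Definition grid_point (j : grid) : 'I_n -> R[i] := fun l => w ^+ j l.

Lemma cabs_prim_root : cabs w = 1.
Proof.
have : cabs w ^+ K = 1 by rewrite -cabsX prim_expr_order ?cabs1.
by move/eqP; rewrite pexpr_eq1 ?cabs_ge0 // => /eqP.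
Qed.

Lemma grid_point_torus j : torus (grid_point j).
Proof. by move=> l; rewrite cabsX cabs_prim_root expr1n. Qed.

Lemma prim_root_mulJ : w * w^*%C = 1.
Proof. by rewrite -cabs_sqr cabs_prim_root expr1n. Qed.

(* Exponents are smaller than K, so distinct exponents give distinct powers of
   w and the corresponding geometric sums vanish. *)
Lemma grid_monomial_orth a b :
  \sum_(j : grid) monomial (grid_point j) a * (monomial (grid_point j) b)^*%C
    = #|{: grid}|%:R * (a == b)%:R.
Proof.
pose F (l : 'I_n) (t : 'I_K) := (w ^+ alpha_nat a l * w^*%C ^+ alpha_nat b l) ^+ t.
transitivity (\sum_(j : grid) \prod_(l < n) F l (j l)).
  apply: eq_bigr => j _; rewrite /monomial rmorph_prod -big_split /=.
  apply: eq_bigr => l _; rewrite /F /grid_point !rmorphXn /= exprMn -!exprM.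
  by rewrite [(alpha_nat a l * _)%N]mulnC [(alpha_nat b l * _)%N]mulnC.
rewrite -bigA_distr_bigA /= /F.
have [<-|neq_ab] := eqVneq a b.
  rewrite mulr1 card_ffun !card_ord natrX (eq_bigr (fun _ => K%:R)) ?prodr_const ?card_ord // => l _.
  rewrite -exprMn prim_root_mulJ expr1n.
  by under eq_bigr do rewrite expr1n; rewrite sumr_const card_ord.
have [l neq_l] : exists l, alpha_nat a l != alpha_nat b l.
  apply/existsP; apply: contraR neq_ab => /existsPn eq_ab; apply/eqP/val_inj.
  by apply/ffunP => l; apply/val_inj/eqP; rewrite -[_ == _]negbK eq_ab.
rewrite mulr0 (bigD1 l) //= sum_expr_unity_root ?mul0r //.
  have wK : w ^+ K = 1 := prim_expr_order w_prim.
  have wJK : w^*%C ^+ K = 1 by rewrite -rmorphXn wK rmorph1.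
  by rewrite exprMn -!exprM !(mulnC _ K) !exprM wK wJK !expr1n mulr1.
apply: contra neq_l => /eqP eq1.
have : w ^+ alpha_nat a l = w ^+ alpha_nat b l.
  by rewrite -[LHS]mulr1 -(expr1n _ (alpha_nat b l)) -prim_root_mulJ exprMn mulrA mulrAC eq1 mul1r.
by move/eqP; rewrite (eq_prim_root_expr w_prim) !modn_small // ltn_ord.
Qed.

Lemma grid_parseval c :
  \sum_(j : grid) cabs (\sum_a c a * monomial (grid_point j) a) ^+ 2
    = #|{: grid}|%:R * \sum_a cabs (c a) ^+ 2.
Proof.
apply: (@complexI R); rewrite [RHS]rmorphM !rmorph_sum rmorph_nat /=.
under eq_bigr do rewrite cabs_sqr rmorph_sum big_distrlr /=.
under [in RHS]eq_bigr do rewrite cabs_sqr.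
rewrite exchange_big big_distrr /=; apply: eq_bigr => a _.
rewrite exchange_big (bigD1 a) //= [X in _ + X]big1 ?addr0 => [|b neq_ba].
  under eq_bigr do rewrite rmorphM /= mulrACA.
  by rewrite -big_distrr /= grid_monomial_orth eqxx mulr1 mulrC.
under eq_bigr do rewrite rmorphM /= mulrACA.
by rewrite -big_distrr /= grid_monomial_orth eq_sym (negbTE neq_ba) !mulr0.
Qed.

Lemma weak2_grid_le :
  weak2 (fun i : 'I_#|{: grid}| => monomial (grid_point (enum_val i)))
    <= Num.sqrt (#|{: grid}|%:R * (card_Lam m n)%:R).
Proof.
apply: weak2_le => v vB; rewrite ler_sqrt ?mulr_ge0 ?ler0n //.
rewrite -(big_enum_val (A := xpredT)
  (fun j : grid => cabs (\sum_a v a * monomial (grid_point j) a) ^+ 2)).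
rewrite grid_parseval ler_wpM2l ?ler0n //.
apply: le_trans (_ : _ <= \sum_(a : L) 1) _; last by rewrite sumr_const.
by apply: ler_sum => a _; rewrite expr_le1 ?cabs_ge0 ?(dual_ball_coord_le1 _ vB).
Qed.

End Grid.

Lemma sqr_l2norm c : l2norm c ^+ 2 = \sum_a cabs (c a) ^+ 2.
Proof. by rewrite sqr_sqrtr // sumr_ge0 // => a _; apply: sqr_ge0. Qed.

Lemma sum_l2norm_le_weak2 k (x : 'I_k -> L -> R[i]) :
  \sum_(i < k) l2norm (x i) ^+ 2 <= weak2 x ^+ 2.
Proof.
have [w w_prim] := root_of_unity_exists R (ltn0Sn m).
have grid_gt0 : (0 : R) < #|{: grid}|%:R by rewrite ltr0n card_ffun card_ord expn_gt0.
rewrite -(ler_pM2l grid_gt0) big_distrr /=.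
under eq_bigr do rewrite sqr_l2norm -(grid_parseval w_prim).
rewrite exchange_big /= mulr_natl -sumr_const; apply: ler_sum => j _.
have := weak2_ge x (dual_ball_monomial (grid_point_torus w_prim j)).
under eq_bigr do under eq_bigr do rewrite mulrC.
set A := \sum_(i < k) _ => le_A.
have A_ge0 : 0 <= A by apply: sumr_ge0 => i _; apply: sqr_ge0.
by rewrite -(sqr_sqrtr A_ge0) lerXn2r ?nnegrE ?sqrtr_ge0 ?weak2_ge0.
Qed.

End Torus.

Section TwoSumming.
Variable R : realType.
Variables m n : nat.
Local Notation L := (Lam m n).
Local Notation N := ((card_Lam m n)%:R : R).
Implicit Types (p : R) (c y xi : L -> R[i]) (T : (L -> R[i]) -> L -> R[i]).

Definition two_summing_bounds p T : set R :=
  [set C | 0 <= C /\ forall k (x : 'I_k -> L -> R[i]),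
     Num.sqrt (\sum_(i < k) lpnorm p (T (x i)) ^+ 2) <= C * weak2 x].

Lemma pi2E p T : pi2 p T = inf (two_summing_bounds p T).
Proof. by []. Qed.

Lemma lpnorm_ge0 p y : 0 <= lpnorm p y.
Proof. exact: powR_ge0. Qed.

Lemma two_summing_bounds_l2 p T C : 0 <= C ->
  (forall c, lpnorm p (T c) <= C * l2norm c) -> two_summing_bounds p T C.
Proof.
move=> C_ge0 TC; split=> // k x.
have Cw_ge0 : 0 <= C * weak2 x by rewrite mulr_ge0 ?weak2_ge0.
rewrite -(ger0_norm Cw_ge0) -sqrtr_sqr ler_sqrt ?sqr_ge0 //.
apply: le_trans (_ : _ <= C ^+ 2 * \sum_(i < k) l2norm (x i) ^+ 2) _.
  rewrite big_distrr /=; apply: ler_sum => i _; rewrite -exprMn.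
  by rewrite lerXn2r ?nnegrE ?lpnorm_ge0 ?mulr_ge0 ?sqrtr_ge0.
by rewrite exprMn ler_wpM2l ?sqr_ge0 ?sum_l2norm_le_weak2.
Qed.

Lemma pi2_le_l2 p T C : 0 <= C ->
  (forall c, lpnorm p (T c) <= C * l2norm c) -> pi2 p T <= C.
Proof.
move=> C_ge0 TC; rewrite pi2E; apply: ge_inf; last exact: two_summing_bounds_l2.
by exists 0 => D [].
Qed.

Lemma lpnorm_le_l2 p y : 0 < p < 2 -> lpnorm p y <= N `^ (p^-1 - 2^-1) * l2norm y.
Proof.
move=> /andP[p_gt0 p_lt2]; set r := p / 2.
have r01 : 0 < r < 1 by rewrite divr_gt0 // ltr_pdivrMr // mul1r p_lt2.
set S := \sum_a cabs (y a) ^+ 2.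
have N_gt0 : 0 < N by rewrite ltr0n card_Lam_gt0.
have S_ge0 : 0 <= S by apply: sumr_ge0 => a _; apply: sqr_ge0.
have pow_p a : cabs (y a) `^ p = (cabs (y a) ^+ 2) `^ r.
  by rewrite -powR_mulrn ?cabs_ge0 // -powRrM /r mulrCA mulfV ?mulr1.
have sum_le : \sum_a cabs (y a) `^ p <= N * (S / N) `^ r.
  under eq_bigr do rewrite pow_p.
  by apply: sum_powR_le => // [a|]; [apply: sqr_ge0 | apply: card_Lam_gt0 m n].
apply: le_trans (ge0_ler_powR _ _ _ sum_le) _.
- by rewrite invr_ge0 ltW.
- by rewrite nnegrE sumr_ge0 // => a _; apply: powR_ge0.
- by rewrite nnegrE mulr_ge0 ?powR_ge0 ?ltW.
rewrite powRM ?powR_ge0 ?(ltW N_gt0) // -powRrM.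
have -> : r * p^-1 = 2^-1 by rewrite /r mulrC mulrA mulVf ?gt_eqF ?mul1r.
rewrite -[X in N `^ X](subrK 2^-1) powRD ?(gt_eqF N_gt0) ?implybT //.
rewrite -mulrA -powRM ?(ltW N_gt0) ?divr_ge0 ?(ltW N_gt0) //.
by rewrite [X in X `^ 2^-1]mulrC divfK ?gt_eqF // powR12_sqrt.
Qed.

Lemma lpnorm_unimodular p y : (forall a, cabs (y a) = 1) -> lpnorm p y = N `^ p^-1.
Proof.
by move=> y1; rewrite /lpnorm (eq_bigr (fun=> 1)) ?sumr_const // => a _; rewrite y1 powR1.
Qed.

Lemma linfnorm_ge xi a : cabs (xi a) <= linfnorm xi.
Proof. exact: le_bigmax. Qed.

Lemma linfnorm_ge0 xi : 0 <= linfnorm xi.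
Proof. exact: bigmax_ge_id. Qed.

Lemma linfnorm1 : linfnorm (fun _ : L => 1 : R[i]) = 1.
Proof.
apply: le_anti; rewrite bigmax_le ?ler01 // => [|a _]; last by rewrite cabs1.
have [a _] := card_gt0P (card_Lam_gt0 m n).
by have := linfnorm_ge (fun _ => 1) a; rewrite cabs1.
Qed.

Lemma l2norm_Mxi_le xi c : l2norm (Mxi xi c) <= linfnorm xi * l2norm c.
Proof.
have -> : linfnorm xi = Num.sqrt (linfnorm xi ^+ 2).
  by rewrite sqrtr_sqr ger0_norm ?linfnorm_ge0.
rewrite /l2norm -sqrtrM ?sqr_ge0 // ler_sqrt; last first.
  by rewrite mulr_ge0 ?sqr_ge0 ?sumr_ge0 // => a _; apply: sqr_ge0.
rewrite big_distrr /=; apply: ler_sum => a _; rewrite /Mxi cabsM exprMn.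
by rewrite ler_wpM2r ?sqr_ge0 // lerXn2r ?nnegrE ?cabs_ge0 ?linfnorm_ge0 ?linfnorm_ge.
Qed.

Hypothesis m_gt0 : (0 < m)%N.

Lemma pm_inv : (pm R m)^-1 = (2 * m)%:R^-1 + 2^-1.
Proof.
have m_neq0 : (m%:R : R) != 0 by rewrite pnatr_eq0 -lt0n.
by rewrite /pm invf_div natrM -addn1 natrD; field; rewrite m_neq0.
Qed.

Lemma pm_gt0_lt2 : 0 < pm R m < 2.
Proof.
rewrite divr_gt0 ?ltr0n ?muln_gt0 //= ltr_pdivrMr ?ltr0n //.
by rewrite -natrM ltr_nat ltn_pmul2l.
Qed.

Lemma lpnorm_Mxi_le xi c :
  lpnorm (pm R m) (Mxi xi c) <= N `^ (2 * m)%:R^-1 * linfnorm xi * l2norm c.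
Proof.
apply: le_trans (lpnorm_le_l2 _ pm_gt0_lt2) _.
by rewrite pm_inv addrK -mulrA ler_wpM2l ?powR_ge0 ?l2norm_Mxi_le.
Qed.

Lemma pi2_Mxi_le xi : pi2 (pm R m) (Mxi xi) <= N `^ (2 * m)%:R^-1 * linfnorm xi.
Proof.
apply: pi2_le_l2; last exact: lpnorm_Mxi_le.
by rewrite mulr_ge0 ?powR_ge0 ?linfnorm_ge0.
Qed.

Lemma pi2_M1_ge : N `^ (2 * m)%:R^-1 <= pi2 (pm R m) (Mxi (fun _ : L => 1)).
Proof.
set T := Mxi (fun _ : L => 1 : R[i]).
pose G := {ffun 'I_n -> 'I_m.+1}; set g : R := #|{: G}|%:R.
have N_gt0 : 0 < N by rewrite ltr0n card_Lam_gt0.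
have g_gt0 : 0 < g by rewrite ltr0n card_ffun card_ord expn_gt0.
rewrite pi2E; apply: lb_le_inf.
  exists (N `^ (2 * m)%:R^-1 * linfnorm (fun _ : L => 1 : R[i])).
  apply: two_summing_bounds_l2; last exact: lpnorm_Mxi_le.
  by rewrite mulr_ge0 ?powR_ge0 ?linfnorm_ge0.
move=> C [C_ge0 TC]; have [w w_prim] := root_of_unity_exists R (ltn0Sn m).
pose x (i : 'I_#|{: G}|) : L -> R[i] := monomial (grid_point w (enum_val i)).
have sum_x : \sum_i lpnorm (pm R m) (T (x i)) ^+ 2 = g * (N `^ (pm R m)^-1) ^+ 2.
  have Tx_unimodular i a : cabs (T (x i) a) = 1.
    by rewrite /T /Mxi mul1r cabs_monomial //; exact: grid_point_torus.
  under eq_bigr do rewrite (lpnorm_unimodular _ (Tx_unimodular _)).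
  by rewrite sumr_const card_ord mulr_natl.
have := le_trans (TC _ x) (ler_wpM2l C_ge0 (weak2_grid_le n w_prim)).
rewrite -/g sum_x pm_inv powRD ?(gt_eqF N_gt0) ?implybT // powR12_sqrt ?(ltW N_gt0) //.
rewrite !(sqrtrM _ (ltW g_gt0)) sqrtr_sqr ger0_norm ?mulr_ge0 ?powR_ge0 ?sqrtr_ge0 //.
by rewrite mulrCA ler_pM2r ?mulr_gt0 ?sqrtr_gt0.
Qed.

End TwoSumming.

Lemma card_LamE m n : card_Lam m n = 'C(m + n, m).
Proof.
have -> : 'C(m + n, m) = 'C(n + m, n) by rewrite addnC -bin_sub ?leq_addl // addnK.
rewrite -card_partial_ord_partitions -sum1dep_card /card_Lam card_sig -sum1_card.
rewrite (reindex (fun t : n.-tuple 'I_m.+1 => [ffun j => tnth t j])) /=.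
  by apply: eq_bigl => t; rewrite inE big_tuple; under eq_bigr do rewrite ffunE.
exists (fun a : {ffun 'I_n -> 'I_m.+1} => [tuple a j | j < n]) => [t _|a _].
  by apply: eq_from_tnth => j; rewrite tnth_mktuple ffunE.
by apply/ffunP => j; rewrite ffunE tnth_mktuple.
Qed.

(* Multiply by m`! and compare factorwise: (m + n) (m - i) <= m (m + n - i). *)
Lemma expn_le_bin m n : ((m + n) ^ m <= m ^ m * 'C(m + n, m))%N.
Proof.
rewrite -(leq_pmul2r (fact_gt0 m)) -mulnA bin_ffact -ffactnn !ffact_prod.
have pow_prod c : (c ^ m = \prod_(i < m) c)%N by rewrite prod_nat_const card_ord.
rewrite !pow_prod -!big_split /=.
by apply: leq_prod => i _; have := ltn_ord i; nia.
Qed.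

Section BinomialBounds.
Variable R : realType.

(* Compare the k-th term with the whole binomial expansion of (1 + k/N)^N. *)
Lemma bin_le_expR N k : (0 < k)%N ->
  ('C(N, k)%:R : R) <= (expR 1 * N%:R / k%:R) ^+ k.
Proof.
move=> k_gt0; have [N_lt_k|k_le_N] := ltnP N k.
  by rewrite bin_small // exprn_ge0 // divr_ge0 ?mulr_ge0 ?expR_ge0.
have N_gt0 : (0 : R) < N%:R by rewrite ltr0n (leq_trans k_gt0).
have k_gt0' : (0 : R) < k%:R by rewrite ltr0n.
set x : R := k%:R / N%:R; have x_gt0 : 0 < x by rewrite divr_gt0.
have term_le : 'C(N, k)%:R * x ^+ k <= (x + 1) ^+ N.
  rewrite exprD1n (bigD1 (Ordinal (k_le_N : (k < N.+1)%N))) //= mulr_natl lerDl.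
  by apply: sumr_ge0 => i _; rewrite mulrn_wge0 // exprn_ge0 // ltW.
have exp_le : (x + 1) ^+ N <= expR 1 ^+ k.
  rewrite -expRM_natl addrC; apply: le_trans (_ : _ <= expR x ^+ N) _.
    rewrite lerXn2r ?nnegrE ?expR_ge0 ?expR_ge1Dx //.
    by rewrite addr_ge0 ?ler01 ?(ltW x_gt0).
  by rewrite -expRM_natl /x mulrCA mulfV ?gt_eqF // mulr1.
have xV : (N%:R / k%:R) ^+ k = (x ^+ k)^-1 :> R by rewrite /x -exprVn invf_div.
rewrite -mulrA exprMn xV ler_pdivlMr ?exprn_gt0 //.
exact: le_trans term_le exp_le.
Qed.

Variables m n : nat.
Hypotheses (m_gt0 : (0 < m)%N) (n_gt0 : (0 < n)%N).
Local Notation beta := (1 + (n%:R - 1) / m%:R : R).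

Lemma powR_inv2m_expr (x : R) : 0 <= x -> (x ^+ m) `^ (2 * m)%:R^-1 = Num.sqrt x.
Proof.
move=> x_ge0; rewrite -powR_mulrn // -powRrM -powR12_sqrt //; congr (_ `^ _).
have m_neq0 : (m%:R : R) != 0 by rewrite pnatr_eq0 -lt0n.
by rewrite natrM; field; rewrite m_neq0.
Qed.

Lemma beta_ge0 : 0 <= beta.
Proof. by rewrite addr_ge0 // divr_ge0 ?ler0n // subr_ge0 ler1n. Qed.

Lemma beta_le_ratio : beta <= (m + n)%:R / m%:R.
Proof.
have m_gt0' : (0 : R) < m%:R by rewrite ltr0n.
by rewrite ler_pdivlMr // mulrDl divfK ?gt_eqF // mul1r natrD; lra.
Qed.

Lemma ratio_le_beta : (m + n)%:R / m%:R <= 2 * beta.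
Proof.
have m_ge1 : (1 : R) <= m%:R by rewrite ler1n.
have n_ge1 : (1 : R) <= n%:R by rewrite ler1n.
rewrite ler_pdivrMr ?ltr0n // mulrDr mulrDl mulr1 -mulrA divfK ?gt_eqF ?ltr0n //.
by rewrite natrD; lra.
Qed.

Lemma sqrt_beta_le_root_bin :
  Num.sqrt beta <= ('C(m + n, m))%:R `^ (2 * m)%:R^-1.
Proof.
rewrite -(powR_inv2m_expr beta_ge0) ge0_ler_powR ?nnegrE ?invr_ge0 ?exprn_ge0 ?beta_ge0 //.
apply: le_trans (_ : _ <= ((m + n)%:R / m%:R) ^+ m) _.
  by rewrite lerXn2r ?nnegrE ?beta_ge0 ?divr_ge0 ?beta_le_ratio.
rewrite expr_div_n ler_pdivrMr ?exprn_gt0 ?ltr0n // -!natrX -natrM ler_nat mulnC.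
exact: expn_le_bin.
Qed.

Lemma root_bin_le_sqrt_beta :
  ('C(m + n, m))%:R `^ (2 * m)%:R^-1
    <= 2 * Num.sqrt (2 * expR 1) * Num.sqrt beta.
Proof.
have e_ge0 : (0 : R) <= expR 1 := expR_ge0 1.
set r : R := (m + n)%:R / m%:R; have r_ge0 : 0 <= r by rewrite divr_ge0.
apply: le_trans (_ : _ <= ((expR 1 * r) ^+ m) `^ (2 * m)%:R^-1) _.
  by rewrite ge0_ler_powR ?nnegrE ?invr_ge0 ?exprn_ge0 ?mulr_ge0 // /r mulrA bin_le_expR.
have rhs_ge0 : 0 <= 2 * Num.sqrt (2 * expR 1) * Num.sqrt beta by rewrite !mulr_ge0.
rewrite powR_inv2m_expr ?mulr_ge0 // -[X in _ <= X]ger0_norm // -sqrtr_sqr.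
rewrite ler_sqrt ?sqr_ge0 // !exprMn !sqr_sqrtr ?mulr_ge0 ?beta_ge0 //.
have := ratio_le_beta; have := beta_ge0; rewrite -/r; nra.
Qed.

End BinomialBounds.

Theorem lemma5p6 (R : realType) (m n : nat) (hm : (1 <= m)%N) (hn : (1 <= n)%N) :
  (forall xi : Lam m n -> R[i],
     pi2 (@pm R m) (Mxi xi) <= (card_Lam m n)%:R `^ ((2 * m)%:R^-1) * linfnorm xi)
  /\
  (Num.sqrt (1 + (n%:R - 1) / m%:R : R)
     <= pi2 (@pm R m) (Mxi (fun _ : Lam m n => (1 : R[i])))
   /\ pi2 (@pm R m) (Mxi (fun _ : Lam m n => (1 : R[i])))
      = (card_Lam m n)%:R `^ ((2 * m)%:R^-1)
   /\ (card_Lam m n)%:R `^ ((2 * m)%:R^-1)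
      <= 2 * Num.sqrt (2 * expR (1 : R)) * Num.sqrt (1 + (n%:R - 1) / m%:R : R)).
Proof.
have pi2_M1 : pi2 (pm R m) (Mxi (fun _ : Lam m n => 1))
              = (card_Lam m n)%:R `^ (2 * m)%:R^-1.
  apply/le_anti; rewrite pi2_M1_ge // andbT.
  by have := @pi2_Mxi_le R m n hm (fun _ => 1); rewrite linfnorm1 mulr1.
split; first exact: pi2_Mxi_le.
rewrite pi2_M1 card_LamE; split; first exact: sqrt_beta_le_root_bin.
by split=> //; apply: root_bin_le_sqrt_beta.
Qed.
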